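(* Let $X$ be a complex Banach space and let $1\leq p<q\leq\infty$. Then $\Pi^{\mathcal{B}}_p(\mathbb{D},X)\subseteq\Pi^{\mathcal{B}}_q(\mathbb{D},X)$ and $\pi^{\mathcal{B}}_q(f)\leq\pi^{\mathcal{B}}_p(f)$ for all $f\in\Pi^{\mathcal{B}}_p(\mathbb{D},X)$. Moreover, $\Pi^{\mathcal{B}}_\infty(\mathbb{D},X)=\mathcal{B}(\mathbb{D},X)$ and $\pi^{\mathcal{B}}_\infty(f)=p_{\mathcal{B}}(f)$ for all $f\in\Pi^{\mathcal{B}}_\infty(\mathbb{D},X)$.
   Context: $\mathbb{D}=\{z\in\mathbb{C}:|z|<1\}$. For a complex Banach space $X$, $\mathcal{H}(\mathbb{D},X)$ is the space of holomorphic maps $\mathbb{D}\to X$. For $f\in\mathcal{H}(\mathbb{D},X)$ let $p_{\mathcal{B}}(f)=\sup_{z\in\mathbb{D}}(1-|z|^2)\|f'(z)\|$; $\mathcal{B}(\mathbb{D},X)$ is the space of $f\in\mathcal{H}(\mathbb{D},X)$ with $p_{\mathcal{B}}(f)<\infty$, and $\widehat{\mathcal{B}}(\mathbb{D},X)=\{f\in\mathcal{B}(\mathbb{D},X): f(0)=0\}$, a Banach space with norm $p_{\mathcal{B}}$. Write $\widehat{\mathcal{B}}(\mathbb{D})=\widehat{\mathcal{B}}(\mathbb{D},\mathbb{C})$ and $B_{\widehat{\mathcal{B}}(\mathbb{D})}$ for its closed unit ball. For $1\leq p<\infty$, a map $f\in\mathcal{H}(\mathbb{D},X)$ is called $p$-summing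 Bloch if there is $c\geq0$ such that for all $n\in\mathbb{N}$, $\lambda_1,\dots,\lambda_n\in\mathbb{C}$, $z_1,\dots,z_n\in\mathbb{D}$: $\left(\sum_{i=1}^n|\lambda_i|^p\|f'(z_i)\|^p\right)^{1/p}\leq c\sup_{g\in B_{\widehat{\mathcal{B}}(\mathbb{D})}}\left(\sum_{i=1}^n|\lambda_i|^p|g'(z_i)|^p\right)^{1/p}$; for $p=\infty$ the condition is $\max_{i}|\lambda_i|\|f'(z_i)\|\leq c\sup_{g\in B_{\widehat{\mathcal{B}}(\mathbb{D})}}\max_i|\lambda_i||g'(z_i)|$. The least such $c$ is denoted $\pi^{\mathcal{B}}_p(f)$, and $\Pi^{\mathcal{B}}_p(\mathbb{D},X)$ denotes the space of all $p$-summing Bloch maps $\mathbb{D}\to X$. *)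

From HB Require Import structures.
From mathcomp Require Import all_boot all_order all_algebra.
From mathcomp Require Import all_classical all_reals all_analysis.
From mathcomp Require Import complex.
Set Implicit Arguments. Unset Strict Implicit. Unset Printing Implicit Defensive.
Import Order.TTheory GRing.Theory Num.Theory numFieldNormedType.Exports.
Local Open Scope ring_scope.
Local Open Scope complex_scope.
Local Open Scope classical_set_scope.

Section Defs.
Variable R : realType.
Local Notation K := R[i].
Local Notation C := (R[i])^o.

(* real value of a (real-valued) complex norm *)
Definition rnorm (V : normedModType K) (x : V) : R := complex.Re `|x|.

Definition disc : set C := [set z : C | `|z| < 1].

Definition holomorphic (X : normedModType K) (f : C -> X) : Prop :=
  forall z : C, disc z -> derivable f z 1.

Definition bloch_val (X : normedModType K) (f : C -> X) (z : C) : R :=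
  (1 - rnorm z ^+ 2) * rnorm ('D_1 f z).

Definition pB (X : normedModType K) (f : C -> X) : R :=
  sup [set bloch_val f z | z in disc].

Definition Bloch (X : normedModType K) : set (C -> X) :=
  [set f | holomorphic f /\ exists M : R, forall z, disc z -> bloch_val f z <= M].

Definition hatBloch_ball : set (C -> C) :=
  [set g : C -> C | Bloch g /\ g 0 = 0 /\ pB g <= 1].

Definition lpnorm (p : \bar R) (n : nat) (a : 'I_n -> R) : R :=
  match p with
  | EFin r => (\sum_(i < n) a i `^ r) `^ r^-1
  | _ => \big[Num.max/0]_(i < n) a i
  end.

Definition summing_const (X : normedModType K) (p : \bar R) (f : C -> X) (c : R) : Prop :=
  0 <= c /\
  forall (n : nat) (lam : 'I_n -> C) (z : 'I_n -> C), (forall i, disc (z i)) ->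
    lpnorm p (fun i => rnorm (lam i) * rnorm ('D_1 f (z i))) <=
    c * sup [set lpnorm p (fun i => rnorm (lam i) * rnorm ('D_1 g (z i))) | g in hatBloch_ball].

Definition PiB (X : normedModType K) (p : \bar R) : set (C -> X) :=
  [set f | holomorphic f /\ exists c, summing_const p f c].

Definition piB (X : normedModType K) (p : \bar R) (f : C -> X) : R :=
  inf [set c | summing_const p f c].
End Defs.

(* For finite 1 <= p < q, apply the p-summing inequality to the reweighted
   coefficients lam_i a_i^(q/p - 1), where a_i = |lam_i| ||f'(z_i)||.  The left-hand
   side becomes A^(1/p) with A = sum_i a_i^q, while Hoelder's inequality with the
   conjugate exponents q/p and q/(q-p) bounds every test sum on the right by its
   q-version times A^(1/p - 1/q); dividing by A^(1/p - 1/q) gives the q-summing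
   inequality with the same constant.  For q = oo, reweight by the indicator of a
   single index instead.
   The oo-summing constants are exactly the upper bounds of (1 - |z|^2) ||f'(z)||:
   one direction takes n = 1, the other uses the maps
   phi_a(w) = (1 - |a|^2) w / (1 - conj(a) w), which lie in the unit ball of the
   Bloch space, vanish at 0 and satisfy (1 - |a|^2) |phi_a'(a)| = 1. *)

From HB Require Import structures.
From mathcomp Require Import all_boot all_order all_algebra.
From mathcomp Require Import all_classical all_reals all_analysis.
From mathcomp Require Import complex.
From mathcomp Require Import ring lra.
Import Order.TTheory GRing.Theory Num.Theory numFieldNormedType.Exports.
Local Open Scope ring_scope.
Local Open Scope classical_set_scope.
Set Implicit Arguments. Unset Strict Implicit.

Section lp_norms.
Variable R : realType.
Implicit Types (n : nat) (p q : R).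

Lemma powRVK (u s : R) : 0 <= u -> 0 < s -> (u `^ s^-1) `^ s = u.
Proof. by move=> u0 s0; rewrite -powRrM mulVf ?gt_eqF // powRr1. Qed.

Lemma hoelder_sum n (x y : 'I_n -> R) (s s' : R) :
  (forall i, 0 <= x i) -> (forall i, 0 <= y i) -> 0 < s -> 0 < s' ->
  s^-1 + s'^-1 = 1 ->
  \sum_i x i * y i <= (\sum_i x i `^ s) `^ s^-1 * (\sum_i y i `^ s') `^ s'^-1.
Proof.
move=> + + s0 s'0 ss; elim: n x y => [|n IH] x y x0 y0.
  by rewrite !big_ord0 mulr_ge0 // powR_ge0.
rewrite !big_ord_recr /=.
have := IH (fun i => x (widen_ord (leqnSn n) i)) (fun i => y (widen_ord (leqnSn n) i))
  (fun i => x0 _) (fun i => y0 _).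
move=> /lerD /(_ (lexx (x ord_max * y ord_max))) /le_trans; apply.
set X := \sum_(i < n) _; set Y := \sum_(i < n) _.
have X0 : 0 <= X by apply: sumr_ge0 => i _; apply: powR_ge0.
have Y0 : 0 <= Y by apply: sumr_ge0 => i _; apply: powR_ge0.
have := hoelder2 (powR_ge0 X s^-1) (x0 ord_max) (powR_ge0 Y s'^-1) (y0 ord_max) s0 s'0 ss.
by move: (X `^ s^-1) (powRVK X0 s0) (Y `^ s'^-1) (powRVK Y0 s'0) => X' -> Y' ->.
Qed.

Lemma lpnorm_ge0 (p : \bar R) n (u : 'I_n -> R) : 0 <= lpnorm p u.
Proof. by case: p => [r| |] /=; rewrite ?powR_ge0 ?bigmax_ge_id. Qed.

Lemma le_lpnorm (p : \bar R) n (u v : 'I_n -> R) : (0 < p)%E ->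
  (forall i, 0 <= u i) -> (forall i, u i <= v i) -> lpnorm p u <= lpnorm p v.
Proof.
case: p => [r| |//] r0 u0 uv; last exact: (le_bigmax2 _ (fun i _ => uv i)).
rewrite lte_fin in r0; have v0 i : 0 <= v i by apply: le_trans (uv i).
apply: ge0_ler_powR; rewrite ?invr_ge0 ?nnegrE ?(ltW r0) //.
- by apply: sumr_ge0 => i _; apply: powR_ge0.
- by apply: sumr_ge0 => i _; apply: powR_ge0.
by apply: ler_sum => i _; apply: ge0_ler_powR; rewrite ?nnegrE ?(ltW r0).
Qed.

Lemma lpnorm_delta p n (u : 'I_n -> R) j : 0 < p -> 0 <= u j ->
  lpnorm p%:E (fun i => u i * (i == j)%:R) = u j.
Proof.
move=> p0 uj0; rewrite /= (bigD1 j) //= eqxx mulr1 big1 ?addr0.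
  by rewrite -powRrM mulfV ?gt_eqF ?powRr1.
by move=> i /negbTE ->; rewrite mulr0 powR0 ?gt_eqF.
Qed.

Lemma lpnorm_weighted_le p q n (a b : 'I_n -> R) : 0 < p < q ->
  (forall i, 0 <= a i) -> (forall i, 0 <= b i) ->
  lpnorm p%:E (fun i => b i * a i `^ (q / p - 1)) <=
    lpnorm q%:E b * (\sum_i a i `^ q) `^ (p^-1 - q^-1).
Proof.
move=> /andP[p0 pq] a0 b0.
have q0 : 0 < q by apply: lt_trans pq.
have [pn0 qn0] : p != 0 /\ q != 0 by rewrite !gt_eqF.
have qpn0 : q - p != 0 by rewrite subr_eq0 gt_eqF.
pose s := q / p; pose s' := q / (q - p).
have s0 : 0 < s by rewrite divr_gt0.
have s'0 : 0 < s' by rewrite divr_gt0 // subr_gt0.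
have ss : s^-1 + s'^-1 = 1 by rewrite /s /s' !invf_div; field.
have hoelder : \sum_i (b i * a i `^ (q / p - 1)) `^ p <=
    (\sum_i b i `^ q) `^ s^-1 * (\sum_i a i `^ q) `^ s'^-1.
  have Eb : \sum_i (b i `^ p) `^ s = \sum_i b i `^ q.
    by apply: eq_bigr => i _; rewrite -powRrM /s mulrC mulfVK.
  have Ea : \sum_i ((a i `^ (q / p - 1)) `^ p) `^ s' = \sum_i a i `^ q.
    apply: eq_bigr => i _; rewrite -!powRrM /s'; congr (_ `^ _).
    by field; rewrite qpn0 pn0.
  have Eab : \sum_i b i `^ p * (a i `^ (q / p - 1)) `^ p =
      \sum_i (b i * a i `^ (q / p - 1)) `^ p.
    by apply: eq_bigr => i _; rewrite powRM ?powR_ge0.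
  rewrite -Eb -Ea -Eab.
  exact: hoelder_sum (fun i => powR_ge0 (b i) p)
    (fun i => powR_ge0 (a i `^ (q / p - 1)) p) s0 s'0 ss.
have lhs0 : 0 <= \sum_i (b i * a i `^ (q / p - 1)) `^ p.
  by apply: sumr_ge0 => i _; apply: powR_ge0.
have rhs0 : 0 <= (\sum_i b i `^ q) `^ s^-1 * (\sum_i a i `^ q) `^ s'^-1.
  by rewrite mulr_ge0 ?powR_ge0.
have pV0 : 0 <= p^-1 by rewrite invr_ge0 ltW.
apply: le_trans (ge0_ler_powR pV0 lhs0 rhs0 hoelder) _.
suff -> : lpnorm q%:E b * (\sum_i a i `^ q) `^ (p^-1 - q^-1) =
    ((\sum_i b i `^ q) `^ s^-1 * (\sum_i a i `^ q) `^ s'^-1) `^ p^-1 by [].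
rewrite powRM; [congr (_ * _)|exact: powR_ge0|exact: powR_ge0]; rewrite -powRrM.
  by rewrite /s invf_div; congr (_ `^ _); field; rewrite qn0 pn0.
by rewrite /s' invf_div; congr (_ `^ _); field; rewrite qn0 pn0.
Qed.

Lemma lpnorm_weighted_eq p q n (a : 'I_n -> R) : 0 < p < q -> (forall i, 0 <= a i) ->
  lpnorm p%:E (fun i => a i * a i `^ (q / p - 1)) = (\sum_i a i `^ q) `^ p^-1.
Proof.
move=> /andP[p0 pq] a0; congr (_ `^ _); apply: eq_bigr => i _.
have q0 : 0 < q by apply: lt_trans pq.
by rewrite mulr_powRB1 ?divr_gt0 // -powRrM divfK ?gt_eqF.
Qed.

End lp_norms.

Section lpnorm_domination.
Variables (R : realType) (n : nat) (B : set ('I_n -> R)) (M a : 'I_n -> R) (c p : R).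
Hypotheses (B_neq0 : B !=set0) (B_ge0 : forall b, B b -> forall i, 0 <= b i)
  (B_le : forall b, B b -> forall i, b i <= M i).
Hypotheses (c_ge0 : 0 <= c) (p_gt0 : 0 < p) (a_ge0 : forall i, 0 <= a i).
Hypothesis a_dominated : forall t : 'I_n -> R, (forall i, 0 <= t i) ->
  lpnorm p%:E (fun i => a i * t i) <=
    c * sup [set lpnorm p%:E (fun i => b i * t i) | b in B].

Lemma has_sup_lpnorm (q : \bar R) : (0 < q)%E -> has_sup [set lpnorm q b | b in B].
Proof.
move=> q0; split; first by case: B_neq0 => b Bb; exists (lpnorm q b), b.
by exists (lpnorm q M) => _ [b Bb <-]; exact: le_lpnorm q0 (B_ge0 Bb) (B_le Bb).
Qed.

Lemma le_sup_lpnorm (q : \bar R) b : (0 < q)%E -> B b ->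
  lpnorm q b <= sup [set lpnorm q b | b in B].
Proof. by move=> q0 Bb; apply: sup_upper_bound; [exact: has_sup_lpnorm | exists b]. Qed.

Lemma sup_lpnorm_ge0 (q : \bar R) : (0 < q)%E -> 0 <= sup [set lpnorm q b | b in B].
Proof.
move=> q0; case: B_neq0 => b Bb.
exact: le_trans (lpnorm_ge0 _ _) (le_sup_lpnorm q0 Bb).
Qed.

Let dominated_lpnorm_fin q : p < q ->
  lpnorm q%:E a <= c * sup [set lpnorm q%:E b | b in B].
Proof.
move=> pq; have q0 : 0 < q by apply: lt_trans pq.
have pq' : 0 < p < q by rewrite p_gt0.
pose S := sup [set lpnorm q%:E b | b in B]; pose A := \sum_i a i `^ q.
change (A `^ q^-1 <= c * S).
have S0 : 0 <= S by apply: sup_lpnorm_ge0; rewrite lte_fin.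
have A0 : 0 <= A by apply: sumr_ge0 => i _; apply: powR_ge0.
have Sp : sup [set lpnorm p%:E (fun i => b i * a i `^ (q / p - 1)) | b in B] <=
    S * A `^ (p^-1 - q^-1).
  apply: ge_sup; first by case: B_neq0 => b Bb; eexists; exists b.
  move=> _ [b Bb <-]; apply: le_trans (lpnorm_weighted_le pq' a_ge0 (B_ge0 Bb)) _.
  by apply: ler_wpM2r; [exact: powR_ge0 | apply: le_sup_lpnorm; rewrite ?lte_fin].
have := a_dominated (fun i => powR_ge0 (a i) (q / p - 1)); cbv beta.
rewrite (lpnorm_weighted_eq pq' a_ge0) -/A.
move=> /le_trans /(_ (ler_wpM2l c_ge0 Sp)).
have [->|A_neq0] := eqVneq A 0.
  by move=> _; rewrite powR0 ?invr_eq0 ?gt_eqF // mulr_ge0.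
have Ae : 0 < A `^ (p^-1 - q^-1) by rewrite powR_gt0 // lt_neqAle eq_sym A_neq0.
have Ap : A `^ p^-1 = A `^ q^-1 * A `^ (p^-1 - q^-1).
  by rewrite -powRD ?A_neq0 ?implybT // addrC subrK.
by move=> H; rewrite -(ler_pM2r Ae) -mulrA -Ap.
Qed.

Let dominated_lpnorm_max :
  lpnorm +oo%E a <= c * sup [set lpnorm +oo%E b | b in B].
Proof.
apply: bigmax_le => [|j _]; first exact: mulr_ge0 (sup_lpnorm_ge0 _).
have := a_dominated (fun i => ler0n _ (i == j)); cbv beta.
rewrite (lpnorm_delta p_gt0 (a_ge0 j)).
move=> /le_trans; apply; apply: ler_wpM2l => //.
apply: ge_sup; first by case: B_neq0 => b Bb; eexists; exists b.
move=> _ [b Bb <-]; rewrite lpnorm_delta ?B_ge0 //.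
by apply: le_trans (le_sup_lpnorm (ltry _) Bb); exact: le_bigmax.
Qed.

Lemma dominated_lpnorm (q : \bar R) : (p%:E < q)%E ->
  lpnorm q a <= c * sup [set lpnorm q b | b in B].
Proof.
case: q => [q|_|//]; last exact: dominated_lpnorm_max.
by rewrite lte_fin; exact: dominated_lpnorm_fin.
Qed.

End lpnorm_domination.

Section complex_norm.
Variable R : realType.
Local Notation C := (R[i])^o.
Implicit Types (V : normedModType R[i]).

Lemma rnormE V (x : V) : `|x| = (rnorm x)%:C%C.
Proof.
rewrite /rnorm; have := normr_ge0 x.
by case: `|x| => a b; rewrite lecE /= => /andP[/eqP -> _].
Qed.

Lemma rnorm_ge0 V (x : V) : 0 <= rnorm x.
Proof. by have := normr_ge0 x; rewrite rnormE lecR. Qed.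

Lemma rnormZ V (k : C) (x : V) : rnorm (k *: x) = rnorm k * rnorm x.
Proof. by have := normrZ k x; rewrite !rnormE -rmorphM => -[]. Qed.

Lemma rnormM (k x : C) : rnorm (k * x) = rnorm k * rnorm x.
Proof. exact: (@rnormZ C). Qed.

Lemma rnormV (x : C) : rnorm x^-1 = (rnorm x)^-1.
Proof. by have := normfV x; rewrite !rnormE -fmorphV => -[]. Qed.

Lemma rnorm_real (r : R) : rnorm (r%:C%C : C) = `|r|.
Proof. by rewrite /rnorm normc_def /= expr0n /= addr0 sqrtr_sqr. Qed.

Lemma rnorm1 : rnorm (1 : C) = 1.
Proof. by rewrite -[1 : C]/((1 : R)%:C%C) rnorm_real normr1. Qed.

Lemma rnorm0 V : rnorm (0 : V) = 0.
Proof. by rewrite /rnorm normr0. Qed.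

Lemma rnorm_sqr (z : C) : rnorm z ^+ 2 = complex.Re z ^+ 2 + complex.Im z ^+ 2.
Proof. by rewrite /rnorm normc_def /= sqr_sqrtr // addr_ge0 ?sqr_ge0. Qed.

Lemma discP (z : C) : disc z <-> rnorm z < 1.
Proof. by rewrite /disc /= rnormE ltcR. Qed.

Lemma disc0 : disc (0 : C).
Proof. by apply/discP; rewrite rnorm0. Qed.

Lemma disc_weight_gt0 (z : C) : disc z -> 0 < 1 - rnorm z ^+ 2.
Proof.
move=> /discP z1; rewrite subr_gt0 expr2.
by have := rnorm_ge0 z; nra.
Qed.

End complex_norm.

Arguments disc0 {R}.

Section mobius.
Variable R : realType.
Local Notation C := (R[i])^o.
Implicit Types a w : C.

Definition mobius_den a w : C := 1 - a^*%C * w.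

Definition mobius a w : C := (1 - rnorm a ^+ 2)%:C%C * w / mobius_den a w.

Lemma mobius_den_sqr a w :
  rnorm (mobius_den a w) ^+ 2 =
    (1 - rnorm a ^+ 2) * (1 - rnorm w ^+ 2) + rnorm (a - w) ^+ 2.
Proof.
rewrite /mobius_den !rnorm_sqr.
by case: a => a1 a2; case: w => w1 w2; simpc => /=; ring.
Qed.

Lemma mobius_den_gt0 a w : disc a -> disc w -> 0 < rnorm (mobius_den a w) ^+ 2.
Proof.
move=> da dw; rewrite mobius_den_sqr ltr_wpDr ?sqr_ge0 //.
by rewrite mulr_gt0 ?disc_weight_gt0.
Qed.

Lemma mobius_den_neq0 a w : disc a -> disc w -> mobius_den a w != 0.
Proof.
move=> da dw; apply/eqP => den0; have := mobius_den_gt0 da dw.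
by rewrite den0 rnorm0 expr0n ltxx.
Qed.

Lemma is_derive_mobius a w : mobius_den a w != 0 ->
  is_derive w (1 : C) (mobius a) ((1 - rnorm a ^+ 2)%:C%C / mobius_den a w ^+ 2).
Proof.
rewrite /mobius_den => den_neq0.
set k : C := (1 - rnorm a ^+ 2)%:C%C.
pose h : C -> C := cst 1 - a^*%C \*: @id C.
have Dhi : is_derive w (1 : C) (fun y => (h y)^-1)
    (- (h w) ^- 2 *: (0 - a^*%C *: (1 : C))).
  apply: DeriveDef; first by apply: derivableV => //; apply: ex_derive.
  by rewrite deriveV // derive_val.
have Dk : is_derive w (1 : C) (k \*: @id C) (k *: 1) by apply: is_deriveZ.
have -> : mobius a = (k \*: @id C) * (fun y => (h y)^-1) by apply/funext.
apply: (is_derive_eq (is_deriveM Dk Dhi)).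
have -> : h w = 1 - a^*%C * w by [].
rewrite /GRing.scale /= !mulr1.
change (k *: w) with (k * w).
by field.
Qed.

Lemma bloch_val_mobius a w : disc a -> disc w ->
  bloch_val (mobius a) w =
    (1 - rnorm w ^+ 2) * (1 - rnorm a ^+ 2) / rnorm (mobius_den a w) ^+ 2.
Proof.
move=> da dw; have D := is_derive_mobius (mobius_den_neq0 da dw).
rewrite /bloch_val (@derive_val _ _ _ _ _ _ _ D).
rewrite rnormM rnormV expr2 rnormM -expr2 rnorm_real ger0_norm ?mulrA //.
exact: ltW (disc_weight_gt0 da).
Qed.

Lemma bloch_val_mobius_le1 a w : disc a -> disc w -> bloch_val (mobius a) w <= 1.
Proof.
move=> da dw; rewrite bloch_val_mobius // ler_pdivrMr ?mobius_den_gt0 // mul1r.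
by rewrite mobius_den_sqr mulrC lerDl sqr_ge0.
Qed.

Lemma bloch_val_mobius_center a : disc a -> bloch_val (mobius a) a = 1.
Proof.
move=> da; rewrite bloch_val_mobius // mobius_den_sqr subrr rnorm0 expr0n addr0.
by rewrite divff // mulf_neq0 // gt_eqF // disc_weight_gt0.
Qed.

Lemma mobius0 a : mobius a 0 = 0.
Proof. by rewrite /mobius mulr0 mul0r. Qed.

End mobius.

Section bloch_seminorm.
Variables (R : realType) (V : normedModType R[i]).
Local Notation C := (R[i])^o.
Implicit Types (f : C -> V) (z : C).

Lemma bloch_val_ge0 f z : disc z -> 0 <= bloch_val f z.
Proof. by move=> dz; rewrite /bloch_val mulr_ge0 ?rnorm_ge0 ?ltW ?disc_weight_gt0. Qed.

Lemma bloch_val_le_pB f z : Bloch f -> disc z -> bloch_val f z <= pB f.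
Proof.
move=> [_ [M fM]] dz; apply: sup_upper_bound; last by exists z.
split; first by exists (bloch_val f z), z.
by exists M => _ [w dw <-]; apply: fM.
Qed.

Lemma pB_ge0 f : Bloch f -> 0 <= pB f.
Proof.
by move=> bf; apply: le_trans (bloch_val_ge0 f disc0) (bloch_val_le_pB bf disc0).
Qed.

Lemma pB_le f c : (forall z, disc z -> bloch_val f z <= c) -> pB f <= c.
Proof.
move=> fc; apply: ge_sup; first by exists (bloch_val f 0), 0 => //; exact: disc0.
by move=> _ [z dz <-]; apply: fc.
Qed.

End bloch_seminorm.

Section bloch_ball.
Variable R : realType.
Local Notation C := (R[i])^o.

Lemma mobius_ball (a : C) : disc a -> hatBloch_ball (mobius a).
Proof.
move=> da; have hol : holomorphic (mobius a).
  move=> w dw; have D := is_derive_mobius (mobius_den_neq0 da dw).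
  exact: (@ex_derive _ _ _ _ _ _ _ D).
split; first by split => //; exists 1 => w; apply: bloch_val_mobius_le1.
by split; [exact: mobius0 | apply: pB_le => w; apply: bloch_val_mobius_le1].
Qed.

Lemma ball_deriv_le (g : C -> C) (z : C) : hatBloch_ball g -> disc z ->
  rnorm ('D_1 g z) <= (1 - rnorm z ^+ 2)^-1.
Proof.
move=> [bg [_ pBg]] dz; have := le_trans (bloch_val_le_pB bg dz) pBg.
by rewrite /bloch_val -ler_pdivlMl ?disc_weight_gt0 // mulr1.
Qed.

End bloch_ball.

Section summing_constants.
Variable R : realType.
Local Notation C := (R[i])^o.
Variable X : normedModType R[i].
Implicit Types (p q : \bar R) (f : C -> X) (c : R).

Definition weighted_deriv (V : normedModType R[i]) n (lam z : 'I_n -> C) (h : C -> V) :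
  'I_n -> R := fun i => rnorm (lam i) * rnorm ('D_1 h (z i)).

Definition ball_seqs n (lam z : 'I_n -> C) : set ('I_n -> R) :=
  weighted_deriv lam z @` @hatBloch_ball R.

Lemma weighted_deriv_ge0 (V : normedModType R[i]) n (lam z : 'I_n -> C) (h : C -> V) i :
  0 <= weighted_deriv lam z h i.
Proof. by rewrite mulr_ge0 ?rnorm_ge0. Qed.

Lemma weighted_deriv_scale (V : normedModType R[i]) n (lam z : 'I_n -> C)
    (t : 'I_n -> R) (h : C -> V) : (forall i, 0 <= t i) ->
  weighted_deriv (fun i => lam i * (t i)%:C%C) z h =
    fun i => weighted_deriv lam z h i * t i.
Proof.
move=> t0; apply/funext => i.
by rewrite /weighted_deriv rnormM rnorm_real ger0_norm // mulrAC.
Qed.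

Lemma ball_seqs_scale p n (lam z : 'I_n -> C) (t : 'I_n -> R) : (forall i, 0 <= t i) ->
  [set lpnorm p (fun i => b i * t i) | b in ball_seqs lam z] =
  [set lpnorm p b | b in ball_seqs (fun i => lam i * (t i)%:C%C) z].
Proof.
move=> t0; rewrite /ball_seqs !image_comp; apply: eq_imagel => g _ /=.
by rewrite weighted_deriv_scale.
Qed.

Lemma summing_constP p f c :
  summing_const p f c <->
  0 <= c /\ forall n (lam z : 'I_n -> C), (forall i, disc (z i)) ->
    lpnorm p (weighted_deriv lam z f) <= c * sup [set lpnorm p b | b in ball_seqs lam z].
Proof.
rewrite /ball_seqs; split=> -[c0 fc]; split=> // n lam z dz.
  by rewrite image_comp; exact: fc.
by have := fc n lam z dz; rewrite image_comp.
Qed.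

Lemma ball_seqs_neq0 n (lam z : 'I_n -> C) : ball_seqs lam z !=set0.
Proof.
by exists (weighted_deriv lam z (mobius 0)), (mobius 0) => //; exact: mobius_ball disc0.
Qed.

Lemma ball_seqs_ge0 n (lam z : 'I_n -> C) b : ball_seqs lam z b -> forall i, 0 <= b i.
Proof. by move=> [g _ <-] i; exact: weighted_deriv_ge0. Qed.

Lemma ball_seqs_le n (lam z : 'I_n -> C) : (forall i, disc (z i)) ->
  forall b, ball_seqs lam z b ->
  forall i, b i <= rnorm (lam i) * (1 - rnorm (z i) ^+ 2)^-1.
Proof.
move=> dz _ [g gB <-] i.
by apply: ler_wpM2l; [exact: rnorm_ge0 | exact: ball_deriv_le].
Qed.

Lemma summing_const_mono p q f c : (1 <= p)%E -> (p < q)%E ->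
  summing_const p f c -> summing_const q f c.
Proof.
case: p => [p| |] //; last by move=> _; rewrite ltNge leey.
rewrite lee_fin => p1 pq /summing_constP[c0 fc].
apply/summing_constP; split=> // n lam z dz.
apply: (dominated_lpnorm (ball_seqs_neq0 lam z) (@ball_seqs_ge0 _ lam z)
  (ball_seqs_le dz) c0 (lt_le_trans ltr01 p1) (weighted_deriv_ge0 lam z f) _ pq).
by move=> t t0; rewrite ball_seqs_scale // -weighted_deriv_scale //; exact: fc.
Qed.

Lemma summing_const_infty_le f c z :
  summing_const +oo f c -> disc z -> bloch_val f z <= c.
Proof.
move=> /summing_constP[c0 fc] dz; have w0 := disc_weight_gt0 dz.
set w := 1 - rnorm z ^+ 2 in w0 *.
have S1 : sup [set lpnorm +oo b | b in ball_seqs (fun _ : 'I_1 => 1) (fun=> z)] <= w^-1.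
  apply: ge_sup.
    by have [b tb] := ball_seqs_neq0 (fun _ : 'I_1 => 1) (fun=> z); exists (lpnorm +oo b), b.
  move=> _ [b tb <-]; apply: bigmax_le => [|i _]; first by rewrite invr_ge0 ltW.
  by have := ball_seqs_le (fun=> dz) tb i; rewrite rnorm1 mul1r.
have := le_trans (le_bigmax _ _ ord0) (fc 1%N (fun=> 1) (fun=> z) (fun=> dz)).
rewrite /weighted_deriv rnorm1 mul1r => /le_trans /(_ (ler_wpM2l c0 S1)).
by rewrite /bloch_val -/w mulrC -ler_pdivlMl.
Qed.

Lemma summing_const_infty_pB f : Bloch f -> summing_const +oo f (pB f).
Proof.
move=> bf; apply/summing_constP; split=> [|n lam z dz]; first exact: pB_ge0.
have S0 := sup_lpnorm_ge0 (ball_seqs_neq0 lam z) (@ball_seqs_ge0 _ lam z)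
  (ball_seqs_le dz) (ltry 0).
apply: bigmax_le => [|j _]; first exact: mulr_ge0 (pB_ge0 bf) S0.
set g := mobius (z j).
have tg : ball_seqs lam z (weighted_deriv lam z g) by exists g => //; exact: mobius_ball.
have -> : weighted_deriv lam z f j = bloch_val f (z j) * weighted_deriv lam z g j.
  have := bloch_val_mobius_center (dz j); rewrite /bloch_val /weighted_deriv -/g => g1.
  transitivity (rnorm (lam j) * rnorm ('D_1 f (z j)) *
    ((1 - rnorm (z j) ^+ 2) * rnorm ('D_1 g (z j)))); first by rewrite g1 mulr1.
  by ring.
apply: le_trans (ler_wpM2r (weighted_deriv_ge0 _ _ _ _) (bloch_val_le_pB bf (dz j))) _.
apply: ler_wpM2l; first exact: pB_ge0.
apply: le_trans (le_bigmax 0 (weighted_deriv lam z g) j) _.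
by have := le_sup_lpnorm (ball_seqs_neq0 lam z) (@ball_seqs_ge0 _ lam z)
  (ball_seqs_le dz) (ltry 0) tg.
Qed.

Lemma piB_le p f c : summing_const p f c -> piB p f <= c.
Proof. by move=> fc; apply: ge_inf => //; exists 0 => y []. Qed.

End summing_constants.

Theorem proposition1p1 (R : realType) (X : completeNormedModType R[i]) :
  (forall p q : \bar R, (1 <= p)%E -> (p < q)%E ->
     @PiB R X p `<=` @PiB R X q /\
     (forall f, @PiB R X p f -> piB q f <= piB p f)) /\
  (@PiB R X +oo%E = @Bloch R X /\
     (forall f, @PiB R X +oo%E f -> piB +oo%E f = pB f)).
Proof.
split=> [p q p1 pq|]; first split.
- by move=> f [hol [c fc]]; split=> //; exists c; exact: summing_const_mono fc.
- move=> f [_ [c fc]]; apply: lb_le_inf; first by exists c.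
  by move=> c' /(summing_const_mono p1 pq) /piB_le.
have PiB_Bloch : PiB +oo%E = @Bloch R X.
  apply/seteqP; split=> f.
    by move=> [hol [c fc]]; split=> //; exists c => z; exact: summing_const_infty_le.
  by move=> bf; split; [exact: bf.1 | exists (pB f); exact: summing_const_infty_pB].
split=> // f; rewrite PiB_Bloch => bf; have fpB := summing_const_infty_pB bf.
apply/eqP; rewrite eq_le (piB_le fpB) /=.
apply: lb_le_inf; first by exists (pB f).
by move=> c fc; apply: pB_le => z; exact: summing_const_infty_le.
Qed.
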